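(* Let $G$ be a connected oriented graph derived from a Burling tree $(T,r,\ell,c)$, and suppose that $G$ has no cut vertex and no vertex of degree at most $1$. Let $S$ be the top-set of $G$. Then: (i) $G[S]$ is an in-star with at least two leaves (so $G$ has a unique pivot and its in-neighbors in $G[S]$ are the antennas of $G$); (ii) all vertices of $S\setminus\{v\}$ are sources of $G$, where $v$ is the unique sink of $G[S]$; (iii) the pivot of $G$ is an ancestor in $T$ of all vertices of $V(G)\setminus S$.
   Context: Oriented graphs are finite, without loops, multiple arcs or pairs of opposite arcs; connectivity, degree and cut vertices refer to the underlying graph. In a rooted tree $T$ with root $r$, each non-root vertex $v$ has a parent $p(v)$; children, leaves, ancestors and descendants are as usual. A branch is a sequence $v_1\dots v_k$ ($k\ge0$) with $v_i$ the parent of $v_{i+1}$; it starts at $v_1$. A Burling tree is a 4-tuple $(T,r,\ell,c)$: $T$ a rooted tree with root $r$; $\ell$ assigns to each non-leaf vertex $v$ one of its children $\ell(v)$ (the last-born of $v$); $c$ assigns to every vertex $v$ that is neither the root nor a last-born the vertex-set of a (possibly empty) branch starting at $\ell(p(v))$, and $c(v)=\emptyset$ if $v$ is the root or a last-born. The oriented graph fully derived from it has vertex-set $V(T)$ and an arc $uv$ iff $v\in c(u)$; an oriented graph is derived from the Burling tree if it is an induced subgraph of the fully derived one. The top-set of $G$ (with respect to $T$) is the set of vertices $v$ of $G$ such that $v$ is the only vertex of $G$ on the branch of $T$ from $r$ to $v$. A pivot of $G$ is a sink of $G[S]$ and an antenna of $G$ is a source of $G[S]$, where $S$ is the top-set.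 An in-tree is an oriented graph obtained from a rooted tree by orienting every edge towards the root; an in-star is an in-tree whose unique sink is adjacent to all other vertices; its leaves are its vertices other than the sink. *)

From mathcomp Require Import all_boot.
Set Implicit Arguments.
Unset Strict Implicit.
Unset Printing Implicit Defensive.

Section Burling.
Variable V : finType.

(* The tree edges are {v, par v} for v <> r. *)
Definition rooted_tree (r : V) (par : V -> V) : Prop :=
  par r = r /\ forall v, fconnect par v r.

Definition anceq (par : V -> V) (u v : V) : bool := fconnect par v u.
Definition anc (par : V -> V) (u v : V) : bool := (u != v) && anceq par u v.

Definition is_child (r : V) (par : V -> V) (w v : V) : bool :=
  (w != r) && (par w == v).

Definition is_last_born (r : V) (par lb : V -> V) (v : V) : bool :=
  (v != r) && (lb (par v) == v).

Definition branch_set (par : V -> V) (a : V) (B : {set V}) : Prop :=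
  B = set0 \/
  exists w, anceq par a w /\ B = [set x | anceq par a x && anceq par x w].

(* Burling tree (T, r, l, c); lb is the last-born function (its value on
   leaves is irrelevant), c the function c. *)
Definition burling_tree (r : V) (par lb : V -> V) (c : V -> {set V}) : Prop :=
  [/\ rooted_tree r par,
      (forall v, (exists w, is_child r par w v) -> is_child r par (lb v) v) &
      (forall v, if (v == r) || is_last_born r par lb v then c v = set0
                 else branch_set par (lb (par v)) (c v))].

(* ---------- the derived oriented graph G = (fully derived graph)[X] ---------- *)
Definition arc (c : V -> {set V}) (X : {set V}) (u v : V) : bool :=
  [&& u \in X, v \in X & v \in c u].

Definition gadj (c : V -> {set V}) (X : {set V}) : rel V :=
  fun u v => arc c X u v || arc c X v u.

Definition degree (c : V -> {set V}) (X : {set V}) (x : V) : nat :=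
  #|[set y in X | gadj c X x y]|.

Definition connected_graph (c : V -> {set V}) (X : {set V}) : Prop :=
  X != set0 /\ {in X &, forall u v, connect (gadj c X) u v}.

(* x is a cut vertex of G: deleting x increases the number of components,
   i.e. some two vertices of G - x connected in G are disconnected in G - x *)
Definition cut_vertex (c : V -> {set V}) (X : {set V}) (x : V) : Prop :=
  x \in X /\
  exists u w, [/\ u \in X :\ x, w \in X :\ x, connect (gadj c X) u w &
                  ~~ connect (gadj c (X :\ x)) u w].

Definition top_set (par : V -> V) (X : {set V}) : {set V} :=
  [set v in X | [forall u, anc par u v ==> (u \notin X)]].

(* sinks / sources of the induced subgraph G[A] (arcs of G[A] = arcs of G
   between vertices of A) *)
Definition sink_in (c : V -> {set V}) (X A : {set V}) (x : V) : bool :=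
  (x \in A) && [forall y, (y \in A) ==> ~~ arc c X x y].
Definition source_in (c : V -> {set V}) (X A : {set V}) (x : V) : bool :=
  (x \in A) && [forall y, (y \in A) ==> ~~ arc c X y x].

Definition pivot (par : V -> V) (c : V -> {set V}) (X : {set V}) (x : V) :=
  sink_in c X (top_set par X) x.
Definition antenna (par : V -> V) (c : V -> {set V}) (X : {set V}) (x : V) :=
  source_in c X (top_set par X) x.

(* G[A] is an in-star with sink s: the underlying graph of G[A] is a star
   centred at s (adjacent to all other vertices of A, no other edges), and
   all edges are oriented towards s.  Its leaves are A :\ s. *)
Definition in_star_with_sink (c : V -> {set V}) (X A : {set V}) (s : V) : Prop :=
  s \in A /\
  {in A &, forall x y, arc c X x y = (x != s) && (y == s)}.

End Burling.

From Pilot Require Import Defs.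
From mathcomp Require Import all_boot.
Set Implicit Arguments. Unset Strict Implicit. Unset Printing Implicit Defensive.

(* Every vertex of G lies below a unique top vertex.  An arc whose ends lie
   below two different top vertices x and y leaves from x itself, and, as
   c u is a branch, all out-neighbours of u lie below a single top vertex.
   Say that x in S points into y if x has an out-neighbour below y; since
   c x starts at the last-born sibling of x, the depth of the parent grows
   strictly from x to y whenever y has an out-neighbour too.

   Let y in S have an out-neighbour w.  The vertices strictly below y and the
   top vertices pointing into y form a set that no edge of G - y leaves (by
   induction on the depth of the parent, the top vertices pointing into y
   are sources), and w is not in it.  As y is not a cut vertex, the set is
   empty: y is a source of G and the only vertex of G below y.  Hence some
   top vertex v is a sink of G, and by connectivity every other top vertex
   points into v, so it sends an arc to v, is a source and is alone in its
   subtree.  Every vertex outside S then lies strictly below v, and the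
   degree condition at v yields at least two leaves. *)

Section RootedTree.
Variables (V : finType) (r : V) (par : V -> V).
Local Notation anq := (anceq par).

Lemma anceqP u v : reflect (exists n, iter n par v = u) (anq u v).
Proof.
apply: (iffP idP) => [uv|[n <-]]; last exact: fconnect_iter.
by exists (findex par v u); apply: iter_findex.
Qed.

Lemma anceq_refl u : anq u u.
Proof. exact: connect0. Qed.

Lemma anceq_trans a b d : anq a b -> anq b d -> anq a d.
Proof. by move=> ab bd; apply: connect_trans bd ab. Qed.

Lemma anceq_par v : anq (par v) v.
Proof. exact: fconnect1. Qed.

Lemma anceq_neq_par a b : anq a b -> a != b -> anq a (par b).
Proof.
case/anceqP=> [[|n]] <-; first by rewrite eqxx.
by rewrite iterSr => _; apply/anceqP; exists n.
Qed.

Lemma anceq_total a b w : anq a w -> anq b w -> anq a b || anq b a.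
Proof.
case/anceqP=> i <- /anceqP[j <-]; apply/orP.
case: (leqP i j) => [ij|/ltnW ji]; [right|left]; apply/anceqP.
  by exists (j - i); rewrite -iterD subnK.
by exists (i - j); rewrite -iterD subnK.
Qed.

Definition depth v := #|[set u | anq u v]|.

Lemma leq_depth a b : anq a b -> depth a <= depth b.
Proof.
move=> ab; apply/subset_leq_card/subsetP => u; rewrite !inE => ua.
exact: anceq_trans ua ab.
Qed.

Hypothesis tree : rooted_tree r par.

Lemma iter_par_root n : iter n par r = r.
Proof. by elim: n => //= n ->; apply: tree.1. Qed.

Lemma par_fixed_root a : par a = a -> a = r.
Proof. by move=> pa; case/anceqP: (tree.2 a) => n <-; elim: n => //= n <-. Qed.

Lemma anceq_antisym a b : anq a b -> anq b a -> a = b.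
Proof.
case/anceqP=> i <- /anceqP[j]; rewrite -iterD => cycle_b.
have iter_cycle m : iter ((j + i) * m) par b = b.
  by elim: m => [|m IH]; rewrite ?muln0 // mulnS iterD IH cycle_b.
case/anceqP: (tree.2 b) => n root_b.
have [/eqP|pos] := posnP (j + i); first by rewrite addn_eq0 => /andP[_ /eqP->].
have b_r : b = r.
  by rewrite -(iter_cycle n) -(subnK (leq_pmull n pos)) iterD root_b iter_par_root.
by rewrite b_r iter_par_root.
Qed.

Lemma ltn_depth a b : anq a b -> a != b -> depth a < depth b.
Proof.
move=> ab a_b; apply/proper_card/properP; split.
  by apply/subsetP => u; rewrite !inE => ua; apply: anceq_trans ua ab.
exists b; rewrite !inE ?anceq_refl //; apply: contra a_b => ba.
by rewrite (anceq_antisym ab ba).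
Qed.

Lemma depth_par a : a != r -> depth (par a) < depth a.
Proof.
move=> a_r; apply: ltn_depth (anceq_par a) _.
by apply: contra a_r => /eqP/par_fixed_root->.
Qed.

Lemma sibling_not_anceq a b : par a = par b -> a != b -> a != r -> ~~ anq a b.
Proof.
move=> pab a_b a_r; apply/negP => ab.
have apa : anq a (par a) by rewrite pab; apply: anceq_neq_par ab a_b.
have /par_fixed_root/eqP := esym (anceq_antisym apa (anceq_par a)).
by rewrite (negbTE a_r).
Qed.

End RootedTree.

Section DerivedGraph.
Variables (V : finType) (c : V -> {set V}).

Lemma gadj_sym (Y : {set V}) : symmetric (gadj c Y).
Proof. by move=> x y; rewrite /gadj orbC. Qed.

Lemma closed_connect_gadj (Y Z : {set V}) x y :
  (forall a b, gadj c Y a b -> a \in Z -> b \in Z) ->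
  connect (gadj c Y) x y -> x \in Z -> y \in Z.
Proof.
move=> closedZ /(closed_connect (intro_closed (sym_connect_sym (gadj_sym Y)) closedZ)).
by move->.
Qed.

Variable X : {set V}.

Lemma gadj_setD1 y a b : gadj c (X :\ y) a b -> [/\ gadj c X a b, a != y & b != y].
Proof.
rewrite /gadj /Defs.arc !in_setD1.
by case/orP => /and3P[/andP[-> ->] /andP[-> ->] ->]; rewrite ?orbT.
Qed.

Lemma connected_closed_sub (Z : {set V}) x :
  connected_graph c X -> (forall a b, gadj c X a b -> a \in Z -> b \in Z) ->
  x \in X -> x \in Z -> X \subset Z.
Proof.
case=> _ conn closedZ xX xZ; apply/subsetP => u uX.
exact: closed_connect_gadj closedZ (conn x u xX uX) xZ.
Qed.

Lemma no_cut_closed_sub y (Z : {set V}) z :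
  connected_graph c X -> ~ cut_vertex c X y -> y \in X -> Z \subset X :\ y ->
  (forall a b, gadj c (X :\ y) a b -> a \in Z -> b \in Z) ->
  z \in Z -> X :\ y \subset Z.
Proof.
move=> [_ conn] no_cut yX sub_Z closedZ zZ; apply/subsetP => w wXy.
apply: contraT => wZ; case: no_cut; split=> //; exists z, w.
have zXy := subsetP sub_Z z zZ.
have inX u : u \in X :\ y -> u \in X by rewrite in_setD1 => /andP[].
split=> //; first exact: conn (inX z zXy) (inX w wXy).
by apply: contra wZ => /(closed_connect_gadj closedZ); apply.
Qed.

Lemma in_star_sinkE (A : {set V}) s x :
  in_star_with_sink c X A s -> sink_in c X A x <-> x = s.
Proof.
case=> sA star; split=> [/andP[xA /forallP/(_ s)]|->].
  by rewrite sA star // eqxx andbT negbK => /eqP.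
by rewrite /sink_in sA; apply/forallP => y; apply/implyP => yA; rewrite star ?eqxx.
Qed.

Lemma in_star_sourceE (A : {set V}) s x :
  in_star_with_sink c X A s -> A :\ s != set0 -> source_in c X A x <-> x \in A :\ s.
Proof.
case=> sA star /set0Pn[y]; rewrite in_setD1 => /andP[ys yA]; split.
  by case/andP=> xA /forallP/(_ y); rewrite yA star // ys /= in_setD1 xA andbT.
rewrite in_setD1 => /andP[xs xA]; rewrite /source_in xA.
by apply/forallP => z; apply/implyP => zA; rewrite star // (negbTE xs) andbF.
Qed.

End DerivedGraph.

Section BurlingTree.
Variables (V : finType) (r : V) (par lb : V -> V) (c : V -> {set V}).
Hypothesis burling : burling_tree r par lb c.
Local Notation anq := (anceq par).
Local Notation lsib u := (lb (par u)).

Lemma burling_rooted : rooted_tree r par.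
Proof. by case: burling. Qed.

Lemma out_lsib u w : w \in c u ->
  [/\ u != r, lsib u != r, lsib u != u & par (lsib u) = par u].
Proof.
case: burling => _ has_lb /(_ u); case: ifP => [_ ->|]; first by rewrite inE.
case/norP => u_r not_last _ _; rewrite /is_last_born u_r /= in not_last.
have /andP[lr /eqP lp] : is_child r par (lsib u) (par u).
  by apply: has_lb; exists u; rewrite /is_child u_r eqxx.
by split.
Qed.

Lemma out_branch u w : w \in c u ->
  exists w0, c u = [set x | anq (lsib u) x && anq x w0].
Proof.
move=> wc; case: burling => _ _ /(_ u); case: ifP => [_ E|_].
  by rewrite E inE in wc.
by case=> [E|[w0 [_ ->]]]; [rewrite E inE in wc | exists w0].
Qed.

Lemma lsib_anceq_out u w : w \in c u -> anq (lsib u) w.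
Proof.
by move=> wc; have [w0 E] := out_branch wc; move: wc; rewrite E inE => /andP[].
Qed.

Lemma lsib_no_out u w : w \in c u -> c (lsib u) = set0.
Proof.
move=> wc; have [_ lr lu lp] := out_lsib wc.
case: burling => _ _ /(_ (lsib u)).
by rewrite /is_last_born lr lp eqxx orbT.
Qed.

Lemma out_not_desc u w : w \in c u -> ~~ anq u w.
Proof.
move=> wc; have [u_r lr lu lp] := out_lsib wc; apply/negP => uw.
have ul : u != lsib u by rewrite eq_sym.
case/orP: (anceq_total uw (lsib_anceq_out wc)); apply/negP.
  exact: (sibling_not_anceq burling_rooted (esym lp) ul u_r).
exact: (sibling_not_anceq burling_rooted lp lu lr).
Qed.

Lemma out_neq u w : w \in c u -> u != w.
Proof. by move/out_not_desc; apply: contraNneq => ->; apply: anceq_refl. Qed.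

Lemma out_not_anc u w : w \in c u -> ~~ anq w u.
Proof.
move=> wc; have [_ lr lu lp] := out_lsib wc; apply/negP => wu.
have := anceq_trans (lsib_anceq_out wc) wu.
by apply/negP; apply: (sibling_not_anceq burling_rooted lp lu lr).
Qed.

Variable X : {set V}.
Local Notation S := (top_set par X).
Local Notation arcX := (Defs.arc c X).

Lemma top_in x : x \in S -> x \in X.
Proof. by rewrite inE => /andP[]. Qed.

Lemma top_anceq_eq x y : x \in S -> y \in X -> anq y x -> y = x.
Proof.
rewrite inE => /andP[_ /forallP/(_ y)] x_top yX yx.
by apply/eqP; apply: contraT => y_x; move: x_top; rewrite /anc y_x yx yX.
Qed.

Lemma top_exists w : w \in X -> exists2 t, t \in S & anq t w.
Proof.
move=> wX; have [|t /andP[tX tw] t_min] :=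
  @arg_minnP _ w (fun u => (u \in X) && anq u w) (depth par).
  by rewrite wX anceq_refl.
exists t => //; rewrite inE tX; apply/forallP => u; apply/implyP => /andP[u_t ut].
apply/negP => uX; have := t_min u; rewrite uX (anceq_trans ut tw) => /(_ isT).
by rewrite leqNgt (ltn_depth burling_rooted ut u_t).
Qed.

Lemma top_unique t1 t2 w : t1 \in S -> t2 \in S -> anq t1 w -> anq t2 w -> t1 = t2.
Proof.
move=> t1S t2S t1w t2w; case/orP: (anceq_total t1w t2w) => [t12|t21].
  exact: top_anceq_eq t2S (top_in t1S) t12.
exact/esym/(top_anceq_eq t1S (top_in t2S) t21).
Qed.

Lemma arc_across_tops u w x y : arcX u w -> x \in S -> y \in S ->
  anq x u -> anq y w -> x != y -> u = x.
Proof.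
case/and3P=> _ _ wc xS yS xu yw; apply: contraTeq => u_x; rewrite negbK; apply/eqP.
have [_ _ _ lp] := out_lsib wc.
have x_pu : anq x (par u) by apply: (anceq_neq_par xu); rewrite eq_sym.
have pu_l : anq (par u) (lsib u) by have := anceq_par par (lsib u); rewrite lp.
have [ly|nly] := boolP (anq (lsib u) y).
  exact: top_unique xS yS (anceq_trans x_pu (anceq_trans pu_l ly)) (anceq_refl par y).
have yl : anq y (lsib u).
  by case/orP: (anceq_total (lsib_anceq_out wc) yw) => //; rewrite (negbTE nly).
have y_pu : anq y (par u).
  rewrite -lp; apply: (anceq_neq_par yl).
  by apply: contraNneq nly => ->; apply: anceq_refl.
exact: top_unique xS yS x_pu y_pu.
Qed.

Lemma out_arcs_same_top u w1 w2 y1 y2 : arcX u w1 -> arcX u w2 ->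
  y1 \in S -> y2 \in S -> anq y1 w1 -> anq y2 w2 -> y1 = y2.
Proof.
case/and3P=> _ _ w1c /and3P[_ _ w2c] y1S y2S y1w1 y2w2.
have [w0 cE] := out_branch w1c; move: w1c w2c; rewrite cE !inE.
case/andP=> _ w1w0 /andP[_ w2w0]; case/orP: (anceq_total w1w0 w2w0) => [w12|w21].
  exact: top_unique y1S y2S (anceq_trans y1w1 w12) y2w2.
exact: top_unique y1S y2S y1w1 (anceq_trans y2w2 w21).
Qed.

Lemma arc_into_top t y : arcX t y -> y \in S -> t \in S.
Proof.
move=> ty yS; have /and3P[tX _ yc] := ty; have [s sS st] := top_exists tX.
have [sy|s_y] := eqVneq s y; first by have := out_not_anc yc; rewrite -sy st.
by rewrite (arc_across_tops ty sS yS st (anceq_refl par y) s_y).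
Qed.

Definition points_into x y := [exists w, arcX x w && anq y w].

Lemma points_into_depth x y w w' : x \in S -> y \in S ->
  arcX x w -> anq y w -> arcX y w' -> depth par (par x) < depth par (par y).
Proof.
move=> xS yS /and3P[_ _ wc] yw /and3P[_ _ w'c]; have [_ lr _ lp] := out_lsib wc.
have y_x : y != x by apply: contraNneq (out_not_desc wc) => <-.
have y_l : y != lsib x by apply/eqP => yl; rewrite yl (lsib_no_out wc) inE in w'c.
case/orP: (anceq_total (lsib_anceq_out wc) yw) => [ly|yl].
  rewrite -lp; apply: leq_trans (depth_par burling_rooted lr) (leq_depth _).
  by apply: (anceq_neq_par ly); rewrite eq_sym.
have := anceq_neq_par yl y_l; rewrite lp => /anceq_trans/(_ (anceq_par par x)) yx.
by rewrite (top_anceq_eq xS (top_in yS) yx) eqxx in y_x.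
Qed.

Lemma points_into_top_arc y v : y \in S -> v \in S -> y != v ->
  points_into y v -> arcX y v.
Proof.
move=> yS vS y_v /existsP[w /andP[/and3P[yX _ wc] vw]].
have [w0 cE] := out_branch wc; have [_ _ _ lp] := out_lsib wc.
have l_v : anq (lsib y) v.
  case/orP: (anceq_total (lsib_anceq_out wc) vw) => // vl.
  have [->|v_l] := eqVneq v (lsib y); first exact: anceq_refl.
  have := anceq_neq_par vl v_l; rewrite lp => /anceq_trans/(_ (anceq_par par y)) vy.
  by rewrite (top_anceq_eq yS (top_in vS) vy) eqxx in y_v.
move: wc; rewrite /Defs.arc yX (top_in vS) cE !inE l_v => /andP[_ ww0].
exact: anceq_trans vw ww0.
Qed.

Definition region y := [set u in X | anq y u || (u \in S) && points_into u y].

Lemma region_closed y a b : y \in S -> a \in region y -> gadj c X a b ->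
  [|| b \in region y, (a == y) && arcX y b | [&& a \in S, points_into a y & arcX b a]].
Proof.
move=> yS; rewrite inE => /andP[aX aR] adj.
have bX : b \in X by case/orP: adj => /and3P[].
have [t tS tb] := top_exists bX.
have [ty|t_y] := eqVneq t y; first by rewrite inE bX -ty tb.
case/orP: adj => [ab|ba].
  case/orP: aR => [ya|/andP[aS /existsP[w1 /andP[aw1 yw1]]]].
    have ay : a = y by apply: (arc_across_tops ab yS tS ya tb); rewrite eq_sym.
    by subst a; rewrite eqxx ab orbT.
  by rewrite (out_arcs_same_top aw1 ab yS tS yw1 tb) eqxx in t_y.
have [ya|nya] := boolP (anq y a).
  have bt := arc_across_tops ba tS yS tb ya t_y.
  rewrite inE bX bt tS /=; apply/orP; left; apply/orP; right.
  by apply/existsP; exists a; rewrite -bt ba ya.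
by move: aR; rewrite (negbTE nya) /= => /andP[aS ->]; rewrite aS ba /= !orbT.
Qed.

Lemma out_neighbour_notin_region y w : y \in S -> arcX y w -> w \notin region y.
Proof.
move=> yS yw; apply/negP; rewrite inE => /andP[_ /orP[y_w|]].
  by case/and3P: yw => _ _ /out_not_desc; rewrite y_w.
case/andP=> wS /existsP[w2 /andP[ww2 yw2]].
have := points_into_depth yS wS yw (anceq_refl par w) ww2.
by move/ltn_trans/(_ (points_into_depth wS yS ww2 yw2 yw)); rewrite ltnn.
Qed.

Hypothesis connected : connected_graph c X.
Hypothesis no_cut : forall x, ~ cut_vertex c X x.

Lemma top_out_arc_isolated y w : y \in S -> arcX y w ->
  (forall t, ~~ arcX t y) /\ {in X, forall u, anq y u -> u = y}.
Proof.
have [n] := ubnP (depth par (par y)); elim: n y w => // n IH y w /ltnSE lt_y yS yw.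
have no_in_arc x : x \in S -> points_into x y -> forall t, ~~ arcX t x.
  move=> xS /existsP[w1 /andP[xw1 yw1]].
  exact: (IH x w1 (leq_trans (points_into_depth xS yS xw1 yw1 yw) lt_y) xS xw1).1.
have yX := top_in yS.
set Z := region y :\ y.
have Z0 : Z = set0.
  apply/eqP; apply: contraT => /set0Pn[z zZ].
  have ZXy : Z \subset X :\ y.
    by apply/subsetP => u; rewrite /Z !in_setD1 inE => /andP[-> /andP[-> _]].
  have closedZ a b : gadj c (X :\ y) a b -> a \in Z -> b \in Z.
    move=> /gadj_setD1[ab a_y b_y]; rewrite /Z !in_setD1 a_y b_y /= => aR.
    case/or3P: (region_closed yS aR ab) => // [/andP[/eqP ay]|/and3P[aS ya ba]].
      by rewrite ay eqxx in a_y.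
    by rewrite (negbTE (no_in_arc a aS ya b)) in ba.
  have wXy : w \in X :\ y.
    by case/and3P: (yw) => _ wX /out_neq; rewrite in_setD1 wX eq_sym => ->.
  have := subsetP (no_cut_closed_sub connected (@no_cut y) yX ZXy closedZ zZ) w wXy.
  by rewrite /Z in_setD1 (negbTE (out_neighbour_notin_region yS yw)) andbF.
split=> [t|u uX yu].
  apply/negP => ty; have : t \in Z; last by rewrite Z0 inE.
  have /and3P[_ _ /out_neq t_y] := ty.
  rewrite /Z in_setD1 t_y inE (top_in (arc_into_top ty yS)) /=.
  rewrite (arc_into_top ty yS); apply/orP; right.
  by apply/existsP; exists y; rewrite ty anceq_refl.
apply/eqP; apply: contraT => u_y; have : u \in Z; last by rewrite Z0 inE.
by rewrite /Z in_setD1 u_y inE uX yu.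
Qed.

Lemma top_sink_exists : exists2 v, v \in S & forall w, ~~ arcX v w.
Proof.
have [/set0Pn[x0 x0X] _] := connected; have [s sS _] := top_exists x0X.
have [/existsP[w sw]|/existsPn s_sink] := boolP [exists w, arcX s w]; last by exists s.
have /and3P[_ wX _] := sw; have [z zS zw] := top_exists wX.
exists z => // w'; apply/negP => zw'; have [no_in alone] := top_out_arc_isolated zS zw'.
by move: (no_in s); rewrite -(alone w wX zw) sw.
Qed.

Section Sink.
Variable v : V.
Hypotheses (vS : v \in S) (v_sink : forall w, ~~ arcX v w).

Lemma region_sink_full : X \subset region v.
Proof.
have vR : v \in region v by rewrite inE top_in // anceq_refl.
apply: (connected_closed_sub connected _ (top_in vS) vR) => a b ab aR.
case/or3P: (region_closed vS aR ab) => //.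
  by case/andP=> _; rewrite (negbTE (v_sink b)).
case/and3P=> aS /existsP[w1 /andP[aw1 _]].
by have [/(_ b)/negP] := top_out_arc_isolated aS aw1.
Qed.

Lemma leaf_points_into y : y \in S :\ v -> points_into y v.
Proof.
rewrite in_setD1 => /andP[y_v yS].
move/subsetP/(_ y (top_in yS)): region_sink_full; rewrite inE => /andP[_ /orP[vy|]].
  by rewrite (top_anceq_eq yS (top_in vS) vy) eqxx in y_v.
by rewrite yS.
Qed.

Lemma leaf_arc y : y \in S :\ v -> arcX y v.
Proof.
move=> yL; have := leaf_points_into yL; move: yL; rewrite in_setD1 => /andP[y_v yS].
exact: points_into_top_arc yS vS y_v.
Qed.

Lemma leaf_isolated y : y \in S :\ v ->
  (forall t, ~~ arcX t y) /\ {in X, forall u, anq y u -> u = y}.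
Proof.
move=> yL; have /existsP[w /andP[yw _]] := leaf_points_into yL.
by apply: top_out_arc_isolated yw; move: yL; rewrite in_setD1 => /andP[].
Qed.

Lemma sink_in_star : in_star_with_sink c X S v.
Proof.
split=> // x y xS yS; have [->|x_v] := eqVneq x v; first exact/negbTE/v_sink.
have [->|y_v] /= := eqVneq y v; first by apply: leaf_arc; rewrite in_setD1 x_v.
by apply/negbTE; apply: (leaf_isolated _).1; rewrite in_setD1 y_v.
Qed.

Lemma sink_degree_le : degree c X v <= #|S :\ v|.
Proof.
apply/subset_leq_card/subsetP => y; rewrite inE => /andP[_ /orP[vy|yv]].
  by rewrite (negbTE (v_sink y)) in vy.
by rewrite in_setD1 (arc_into_top yv vS) andbT; case/and3P: yv => _ _ /out_neq.
Qed.

Lemma leaf_source x : x \in S :\ v -> source_in c X X x.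
Proof.
move=> xL; have [no_in _] := leaf_isolated xL; move: xL; rewrite in_setD1 => /andP[_ xS].
by rewrite /source_in top_in //=; apply/forallP => y; apply/implyP => _; apply: no_in.
Qed.

Lemma sink_anc_nontop w : w \in X :\: S -> anc par v w.
Proof.
rewrite in_setD => /andP[wS wX]; have [t tS tw] := top_exists wX.
have [tv|t_v] := eqVneq t v.
  by subst t; rewrite /anc tw andbT; apply: contraNneq wS => <-.
have tL : t \in S :\ v by rewrite in_setD1 t_v.
have [_ alone] := leaf_isolated tL.
by rewrite (alone w wX tw) tS in wS.
Qed.

End Sink.

End BurlingTree.

Theorem lemma4p7 (V : finType) (r : V) (par lb : V -> V) (c : V -> {set V})
    (X : {set V}) :
  burling_tree r par lb c ->
  connected_graph c X ->
  (forall x, ~ cut_vertex c X x) ->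
  (forall x, x \in X -> 2 <= degree c X x) ->
  let S := top_set par X in
  exists v : V,
    [/\ (* (i) G[S] is an in-star with sink v and at least two leaves *)
        in_star_with_sink c X S v /\ 2 <= #|S :\ v|,
        (* consequently v is the unique pivot and the antennas are S \ v *)
        (forall x, pivot par c X x <-> x = v),
        (forall x, antenna par c X x <-> x \in S :\ v),
        (* (ii) every vertex of S \ v is a source of G *)
        (forall x, x \in S :\ v -> source_in c X X x) &
        (* (iii) the pivot is an ancestor in T of every vertex of V(G) \ S *)
        (forall w, w \in X :\: S -> anc par v w)].
Proof.
move=> burling connected no_cut deg S.
have [v vS v_sink] := top_sink_exists burling connected no_cut.
have star := sink_in_star burling connected no_cut vS v_sink.
have leaves : 2 <= #|S :\ v|.
  exact: leq_trans (deg v (top_in vS)) (sink_degree_le burling vS v_sink).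
exists v; split=> //.
- by move=> x; apply: in_star_sinkE star.
- by move=> x; apply: in_star_sourceE star _; rewrite -card_gt0 ltnW.
- by move=> x; apply: (leaf_source burling connected no_cut vS v_sink).
- by move=> w; apply: (sink_anc_nontop burling connected no_cut vS v_sink).
Qed.
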